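(* Let $d\ge2$, $n\ge1$, let $H$ be a Hermitian operator on $(\mathbb{C}^d)^{\otimes n}$ and let $O$ be a linear operator with $\|O\|_2=1$. Then $|R_I(H,O)|\le4n\|H\|_\infty$.
   Context: Let $V=\mathbb{Z}_d\times\mathbb{Z}_d$; for $a=(s,t)\in V$, $P_a=X^sZ^t$ with $X|j\rangle=|j+1\bmod d\rangle$, $Z|j\rangle=e^{2\pi ij/d}|j\rangle$; $P_{\vec a}=\bigotimes_iP_{a_i}$, $|\vec a|=\#\{i:a_i\ne(0,0)\}$. $\|A\|_2=(d^{-n}\mathrm{Tr}(A^\dagger A))^{1/2}$. For $\|O\|_2=1$, $P_O[\vec a]=d^{-2n}|\mathrm{Tr}(OP_{\vec a})|^2$ and $I[O]=\sum_{\vec a}|\vec a|P_O[\vec a]$. The influence rate is $R_I(H,O)=\frac{d}{dt}I[U_tOU_t^\dagger]\big|_{t=0}$ with $U_t=e^{-itH}$; $\|\cdot\|_\infty$ is the operator norm. *)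

From HB Require Import structures.
From mathcomp Require Import all_boot all_order all_algebra.
From mathcomp Require Import all_classical all_reals all_analysis.
From mathcomp Require Import complex.

Set Implicit Arguments.
Unset Strict Implicit.
Unset Printing Implicit Defensive.

Import Order.TTheory GRing.Theory Num.Theory.
Import numFieldNormedType.Exports.
Local Open Scope ring_scope.
Local Open Scope classical_set_scope.

Section QuditDefs.
Variables (R : realType) (d n : nat).

Local Notation C := (R[i]).

Definition basis_label := {ffun 'I_n -> 'I_d}.
(* Hilbert space dimension d^n (= #|basis_label|) *)
Definition dimH : nat := #|{: basis_label}|.
Definition op := 'M[C]_dimH.
Definition digits (k : 'I_dimH) : basis_label := enum_val k.

Definition cabs2 (z : C) : R := (complex.Re z) ^+ 2 + (complex.Im z) ^+ 2.
Definition adj (A : op) : op := (map_mx (@conjc R) A)^T.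
Definition is_hermitian (A : op) : Prop := adj A = A.

Definition omega : C := Complex (cos (2 * pi / d%:R)) (sin (2 * pi / d%:R)).

(* Pauli labels a = (s,t) in Z_d x Z_d, and strings of them *)
Definition pauli_string := {ffun 'I_n -> 'I_d * 'I_d}.

(* P_{vec a} = tensor_i X^{s_i} Z^{t_i}; matrix entry
   <k| P |j> = prod_i [k_i = j_i + s_i mod d] omega^(t_i j_i) *)
Definition pauli (a : pauli_string) : op :=
  \matrix_(k, j) \prod_(i < n)
     ((((digits k i : nat) == ((digits j i + (a i).1) %% d)%N))%:R
       * omega ^+ ((a i).2 * digits j i)%N).

Definition nontrivial_site (p : 'I_d * 'I_d) : bool :=
  (nat_of_ord p.1 != 0)%N || (nat_of_ord p.2 != 0)%N.

Definition weight (a : pauli_string) : nat :=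
  #|[set i : 'I_n | nontrivial_site (a i)]|.

Definition hs_norm (A : op) : R :=
  Num.sqrt (complex.Re (\tr (adj A *m A)) / (d ^ n)%:R).

Definition pauli_weight (O : op) (a : pauli_string) : R :=
  cabs2 (\tr (O *m pauli a)) / ((d ^ n)%:R ^+ 2).

Definition influence (O : op) : R :=
  \sum_(a : pauli_string) (weight a)%:R * pauli_weight O a.

Definition mxpow (A : op) (m : nat) : op := iter m (fun B => A *m B) 1%:M.
Definition expm_partial (A : op) (N : nat) : op :=
  \sum_(m < N) ((m`!)%:R^-1 *: mxpow A m).
Definition expm (A : op) : op :=
  \matrix_(k, j) Complex (limn (fun N : nat => complex.Re (expm_partial A N k j)))
                         (limn (fun N : nat => complex.Im (expm_partial A N k j))).

Definition evol (H : op) (t : R) : op := expm ((Complex 0 (- t)) *: H).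

Definition influence_rate (H O : op) : R :=
  derive1 (fun t : R => influence (evol H t *m O *m adj (evol H t))) 0.

Definition vnorm (v : 'cV[C]_dimH) : R := Num.sqrt (\sum_k cabs2 (v k 0)).
Definition opnorm (A : op) : R :=
  sup [set x : R | exists v : 'cV[C]_dimH, vnorm v = 1 /\ x = vnorm (A *m v)].

End QuditDefs.

(* Write U_t = e^{-itH} = 1 - itH + E_t; the exponential series gives ||E_t||_F = O(t^2) in
   the (unnormalized) Frobenius norm. Hence U_t O U_t^+ - O = -it[H,O] + O(t^2) and, since
   ||[H,O]||_F <= 2 ||H||_oo ||O||_F, ||U_t O U_t^+ - O||_F <= |t| (2 ||H||_oo + O(|t|)) ||O||_F.
   The Pauli strings satisfy Tr(P_a^+ P_b) = d^n [a = b], which yields the Parseval identity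
   sum_a |Tr(Y P_a)|^2 = d^n ||Y||_F^2, and ||O||_2 = 1 means ||O||_F^2 = d^n. As every weight
   is at most n, Cauchy-Schwarz gives |I[X] - I[O]| <= n delta (delta + 2) with
   delta = ||X - O||_F / ||O||_F, so |I[U_t O U_t^+] - I[O]| <= |t| (4 n ||H||_oo + O(|t|)).
   Every difference quotient at 0 is thus at most 4 n ||H||_oo + O(|t|), and so is the
   derivative. *)

From HB Require Import structures.
From mathcomp Require Import all_boot all_order all_algebra.
From mathcomp Require Import all_classical all_reals all_analysis complex.
From mathcomp Require Import ring lra.
Import Order.TTheory GRing.Theory Num.Theory numFieldNormedType.Exports Normc.

Set Implicit Arguments.
Unset Strict Implicit.
Unset Printing Implicit Defensive.

Local Open Scope ring_scope.
Local Open Scope classical_set_scope.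

Lemma le_of_sqr_le (R : rcfType) (a b : R) : 0 <= b -> a ^+ 2 <= b ^+ 2 -> a <= b.
Proof.
move=> b0 ab; apply: le_trans (ler_norm a) _.
by rewrite -sqrtr_sqr -[b]ger0_norm // -sqrtr_sqr ler_sqrt ?sqr_ge0.
Qed.

Section L2norm.
Variables (R : rcfType) (I : finType).
Implicit Types f g : I -> R.

Definition l2norm f : R := Num.sqrt (\sum_i f i ^+ 2).

Lemma sumr_sqr_ge0 f : 0 <= \sum_i f i ^+ 2.
Proof. by apply: sumr_ge0 => i _; rewrite sqr_ge0. Qed.

Lemma l2norm_ge0 f : 0 <= l2norm f.
Proof. exact: sqrtr_ge0. Qed.

Lemma l2norm_sqr f : l2norm f ^+ 2 = \sum_i f i ^+ 2.
Proof. by rewrite sqr_sqrtr // sumr_sqr_ge0. Qed.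

(* Lagrange's identity: the defect of Cauchy-Schwarz is a sum of squares. *)
Lemma CauchySchwarz_sum f g :
  (\sum_i f i * g i) ^+ 2 <= (\sum_i f i ^+ 2) * (\sum_i g i ^+ 2).
Proof.
have expand i j : (f i * g j - f j * g i) ^+ 2 =
    f i ^+ 2 * g j ^+ 2 + g i ^+ 2 * f j ^+ 2 - 2 * (f i * g i) * (f j * g j).
  by ring.
have lagrange : \sum_i \sum_j (f i * g j - f j * g i) ^+ 2 =
    2 * ((\sum_i f i ^+ 2) * (\sum_i g i ^+ 2) - (\sum_i f i * g i) ^+ 2).
  under eq_bigr do under eq_bigr do rewrite expand.
  under eq_bigr do rewrite sumrB big_split /=.
  rewrite sumrB big_split /= !big_distrlr /= expr2 big_distrlr /=.
  have swap : \sum_i \sum_j g i ^+ 2 * f j ^+ 2 = \sum_i \sum_j f i ^+ 2 * g j ^+ 2.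
    by rewrite exchange_big; apply: eq_bigr => i _; apply: eq_bigr => j _; rewrite mulrC.
  have pull2 : \sum_i \sum_j 2 * (f i * g i) * (f j * g j) =
      2 * \sum_i \sum_j f i * g i * (f j * g j).
    rewrite mulr_sumr; apply: eq_bigr => i _; rewrite mulr_sumr.
    by apply: eq_bigr => j _; ring.
  by rewrite swap pull2; ring.
have : 0 <= \sum_i \sum_j (f i * g j - f j * g i) ^+ 2.
  by apply: sumr_ge0 => i _; exact: sumr_sqr_ge0.
by rewrite lagrange pmulr_rge0 // subr_ge0.
Qed.

Lemma l2norm_dot_le f g : \sum_i f i * g i <= l2norm f * l2norm g.
Proof.
apply: le_of_sqr_le; first by rewrite mulr_ge0 ?l2norm_ge0.
by rewrite exprMn !l2norm_sqr CauchySchwarz_sum.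
Qed.

Lemma l2normD f g : l2norm (fun i => f i + g i) <= l2norm f + l2norm g.
Proof.
apply: le_of_sqr_le; first by rewrite addr_ge0 ?l2norm_ge0.
rewrite sqrrD !l2norm_sqr.
under eq_bigr do rewrite sqrrD.
rewrite !big_split /=; have := l2norm_dot_le f g; lra.
Qed.

Lemma l2norm_le f g : (forall i, `|f i| <= g i) -> l2norm f <= l2norm g.
Proof.
move=> fg; rewrite ler_sqrt ?sumr_sqr_ge0 //; apply: ler_sum => i _.
by rewrite -real_normK ?num_real // ler_sqr ?nnegrE // (le_trans _ (fg i)).
Qed.

Lemma l2normZ (c : R) f : l2norm (fun i => c * f i) = `|c| * l2norm f.
Proof.
rewrite /l2norm; under eq_bigr do rewrite exprMn.
by rewrite -mulr_sumr sqrtrM ?sqr_ge0 // sqrtr_sqr.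
Qed.

Lemma l2norm_le_sum f : l2norm f <= \sum_i `|f i|.
Proof.
apply: le_of_sqr_le; first by apply: sumr_ge0.
rewrite l2norm_sqr expr2 big_distrlr /=; apply: ler_sum => i _.
rewrite (bigD1 i) //= -real_normK ?num_real // lerDl.
by apply: sumr_ge0 => j _; rewrite mulr_ge0.
Qed.

End L2norm.

Section ComplexModulus.
Local Open Scope complex_scope.
Variable R : realType.
Local Notation C := R[i].
Implicit Types z w : C.

Lemma cabs2_ge0 z : 0 <= cabs2 z.
Proof. by rewrite /cabs2 addr_ge0 ?sqr_ge0. Qed.

Lemma normc_ge0 z : 0 <= normc z.
Proof. by case: z => a b; exact: sqrtr_ge0. Qed.

Lemma normc_sqr z : normc z ^+ 2 = cabs2 z.
Proof. by case: z => a b; rewrite /= sqr_sqrtr // (cabs2_ge0 (a +i* b)). Qed.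

Lemma cabs2_mulJ z : (cabs2 z)%:C = z * z^*.
Proof.
case: z => a b; apply/eqP; rewrite eq_complex /cabs2 /=.
by apply/andP; split; apply/eqP; ring.
Qed.

Lemma normc_conj z : normc z^* = normc z.
Proof. by case: z => a b; rewrite /= sqrrN. Qed.

Lemma normc_real (x : R) : normc x%:C = `|x|.
Proof. by rewrite /= expr0n /= addr0 sqrtr_sqr. Qed.

Lemma normc_ge_absRe z : `|complex.Re z| <= normc z.
Proof.
case: z => a b; rewrite /= -sqrtr_sqr ler_sqrt ?addr_ge0 ?sqr_ge0 //.
by rewrite lerDl sqr_ge0.
Qed.

Lemma normc_ge_absIm z : `|complex.Im z| <= normc z.
Proof.
case: z => a b; rewrite /= -sqrtr_sqr ler_sqrt ?addr_ge0 ?sqr_ge0 //.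
by rewrite lerDr sqr_ge0.
Qed.

Lemma normc_le_ReIm z : normc z <= `|complex.Re z| + `|complex.Im z|.
Proof.
case: z => a b /=; apply: le_of_sqr_le; first by rewrite addr_ge0.
rewrite sqr_sqrtr ?addr_ge0 ?sqr_ge0 // sqrrD !real_normK ?num_real //.
by have := mulr_ge0 (normr_ge0 a) (normr_ge0 b); lra.
Qed.

Lemma normc_sum (I : finType) (F : I -> C) : normc (\sum_i F i) <= \sum_i normc (F i).
Proof.
elim/big_ind2: _ => [|x1 x2 y1 y2 h1 h2|//]; first by rewrite normc0.
exact: le_trans (le_normcD _ _) (lerD h1 h2).
Qed.

Lemma cabs2B_le z w : `|cabs2 z - cabs2 w| <= normc (z - w) * (normc z + normc w).
Proof.
rewrite -!normc_sqr subr_sqr normrM [`|normc z + normc w|]ger0_norm ?addr_ge0 ?normc_ge0 //.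
apply: ler_wpM2r; first by rewrite addr_ge0 ?normc_ge0.
rewrite ler_norml.
have := le_normcD (z - w) w; have := le_normcD (w - z) z.
by rewrite !subrK -opprB normcN; lra.
Qed.

End ComplexModulus.

Section Frobenius.
Variable R : realType.
Local Notation C := R[i].

Definition frob p q (A : 'M[C]_(p, q)) : R :=
  l2norm (fun ij : 'I_p * 'I_q => normc (A ij.1 ij.2)).

Lemma frob_ge0 p q (A : 'M[C]_(p, q)) : 0 <= frob A.
Proof. exact: l2norm_ge0. Qed.

Lemma frob_sqr p q (A : 'M[C]_(p, q)) : frob A ^+ 2 = \sum_i \sum_j cabs2 (A i j).
Proof. by rewrite l2norm_sqr pair_bigA /=; apply: eq_bigr => ij _; rewrite normc_sqr. Qed.

Lemma frobD p q (A B : 'M[C]_(p, q)) : frob (A + B) <= frob A + frob B.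
Proof.
apply: le_trans (l2normD _ _); apply: l2norm_le => ij.
by rewrite mxE ger0_norm ?normc_ge0 ?le_normcD.
Qed.

Lemma frobN p q (A : 'M[C]_(p, q)) : frob (- A) = frob A.
Proof. by congr l2norm; apply/funext => ij; rewrite mxE normcN. Qed.

Lemma frobB_le p q (A B : 'M[C]_(p, q)) : frob (A - B) <= frob A + frob B.
Proof. by rewrite -(frobN B) frobD. Qed.

Lemma frobZ p q c (A : 'M[C]_(p, q)) : frob (c *: A) = normc c * frob A.
Proof.
rewrite -[normc c]ger0_norm ?normc_ge0 // -l2normZ; congr l2norm.
by apply/funext => ij; rewrite mxE normcM.
Qed.

Lemma normc_le_frob p q (A : 'M[C]_(p, q)) i j : normc (A i j) <= frob A.
Proof.
apply: le_of_sqr_le; first exact: frob_ge0.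
rewrite l2norm_sqr (bigD1 (i, j)) //= lerDl.
by apply: sumr_ge0 => ? _; rewrite sqr_ge0.
Qed.

Lemma frob_eq0 p q (A : 'M[C]_(p, q)) : frob A = 0 -> A = 0.
Proof.
move=> A0; apply/matrixP => i j; rewrite mxE; apply: eq0_normc.
by apply: le_anti; rewrite normc_ge0 andbT -A0 normc_le_frob.
Qed.

Lemma frob_le_entries p q (A : 'M[C]_(p, q)) M :
  (forall i j, normc (A i j) <= M) -> frob A <= (p * q)%:R * M.
Proof.
move=> AM; apply: le_trans (l2norm_le_sum _) _.
have -> : (p * q)%:R * M = \sum_(ij : 'I_p * 'I_q) M.
  by rewrite sumr_const card_prod !card_ord mulr_natl.
by apply: ler_sum => ij _; rewrite ger0_norm ?normc_ge0 ?AM.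
Qed.

Lemma frob_mulmx p q r (A : 'M[C]_(p, q)) (B : 'M[C]_(q, r)) :
  frob (A *m B) <= frob A * frob B.
Proof.
apply: le_of_sqr_le; first by rewrite mulr_ge0 ?frob_ge0.
rewrite exprMn !frob_sqr [X in _ * X]exchange_big /= big_distrlr /=.
apply: ler_sum => i _; apply: ler_sum => k _; rewrite mxE.
under eq_bigr do rewrite -normc_sqr.
under [X in _ * X]eq_bigr do rewrite -normc_sqr.
apply: le_trans (CauchySchwarz_sum _ _); rewrite -normc_sqr.
rewrite ler_sqr ?nnegrE ?normc_ge0 ?sumr_ge0 // => [|j _]; last by rewrite mulr_ge0 ?normc_ge0.
by apply: le_trans (normc_sum _) _; apply: ler_sum => j _; rewrite normcM.
Qed.

End Frobenius.

Section Adjoint.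
Variables (R : realType) (d n : nat).
Local Notation op := (op R d n).
Implicit Types A B : op.

Lemma adjM A B : adj (A *m B) = adj B *m adj A.
Proof. by rewrite /adj map_mxM trmx_mul. Qed.

Lemma adjD A B : adj (A + B) = adj A + adj B.
Proof. by apply/matrixP => i j; rewrite !mxE rmorphD. Qed.

Lemma adjZ c A : adj (c *: A) = c^*%C *: adj A.
Proof. by apply/matrixP => i j; rewrite !mxE rmorphM. Qed.

Lemma adj1 : adj 1%:M = 1%:M :> op.
Proof. by apply/matrixP => i j; rewrite !mxE conjc_nat eq_sym. Qed.

Lemma frob_adj A : frob (adj A) = frob A.
Proof.
rewrite -[LHS]ger0_norm ?frob_ge0 // -[RHS]ger0_norm ?frob_ge0 // -!sqrtr_sqr !frob_sqr.
rewrite exchange_big /=; congr Num.sqrt.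
by apply: eq_bigr => i _; apply: eq_bigr => j _; rewrite !mxE -!normc_sqr normc_conj.
Qed.

Lemma Re_tr_adj_mul A : complex.Re (\tr (adj A *m A)) = frob A ^+ 2.
Proof.
rewrite frob_sqr /mxtrace raddf_sum exchange_big /=; apply: eq_bigr => j _.
rewrite mxE raddf_sum; apply: eq_bigr => i _.
by rewrite !mxE mulrC -cabs2_mulJ.
Qed.

Lemma hs_norm_sqr A : hs_norm A ^+ 2 = frob A ^+ 2 / (d ^ n)%:R.
Proof. by rewrite /hs_norm Re_tr_adj_mul sqr_sqrtr // divr_ge0 ?sqr_ge0. Qed.

End Adjoint.

Section OperatorNorm.
Local Open Scope complex_scope.
Variables (R : realType) (d n : nat).
Local Notation C := R[i].
Local Notation op := (op R d n).
Local Notation vec := 'cV[C]_(dimH d n).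
Implicit Types A B : op.

Lemma vnorm_frob (v : vec) : vnorm v = frob v.
Proof.
rewrite /vnorm -[RHS]ger0_norm ?frob_ge0 // -sqrtr_sqr frob_sqr; congr Num.sqrt.
by apply: eq_bigr => k _; rewrite big_ord1.
Qed.

Lemma opnorm_has_ubound A :
  has_ubound [set x : R | exists v : vec, vnorm v = 1 /\ x = vnorm (A *m v)].
Proof.
exists (frob A) => x [v [v1 ->]]; rewrite vnorm_frob.
by apply: le_trans (frob_mulmx _ _) _; rewrite -vnorm_frob v1 mulr1.
Qed.

Lemma opnorm_ge0 A : 0 <= opnorm A.
Proof.
rewrite /opnorm; set S := [set x | _].
have [->|/set0P [x Sx]] := eqVneq S set0; first by rewrite sup0.
apply: le_trans (ub_le_sup (opnorm_has_ubound A) Sx).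
by case: Sx => v [_ ->]; rewrite vnorm_frob frob_ge0.
Qed.

Lemma vnorm_mulmx_le A (v : vec) : vnorm (A *m v) <= opnorm A * vnorm v.
Proof.
have [v0|v0] := eqVneq (vnorm v) 0.
  move: v0; rewrite !vnorm_frob => /frob_eq0 ->.
  by rewrite mulmx0 -(scale0r 0) frobZ !normc0 !mul0r mulr0.
have vpos : 0 < vnorm v by rewrite lt0r v0 vnorm_frob frob_ge0.
set u := ((vnorm v)^-1)%:C *: v.
have vnormZ (w : vec) : vnorm (((vnorm v)^-1)%:C *: w) = (vnorm v)^-1 * vnorm w.
  by rewrite !vnorm_frob frobZ normc_real ger0_norm // invr_ge0 frob_ge0.
have Su : exists w : vec, vnorm w = 1 /\ vnorm (A *m u) = vnorm (A *m w).
  by exists u; rewrite vnormZ mulVf.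
have := ub_le_sup (opnorm_has_ubound A) Su.
by rewrite -scalemxAr vnormZ ler_pdivrMl // mulrC.
Qed.

Lemma frob_mulmx_opnorm A B : frob (A *m B) <= opnorm A * frob B.
Proof.
apply: le_of_sqr_le; first by rewrite mulr_ge0 ?opnorm_ge0 ?frob_ge0.
rewrite exprMn !frob_sqr exchange_big /= [X in _ <= _ * X]exchange_big /= mulr_sumr.
apply: ler_sum => j _.
have col_sqr (M : op) : vnorm (col j M) ^+ 2 = \sum_i cabs2 (M i j).
  rewrite /vnorm sqr_sqrtr; last by apply: sumr_ge0 => i _; apply: cabs2_ge0.
  by apply: eq_bigr => i _; rewrite mxE.
rewrite -!col_sqr -exprMn [col j (A *m B)]colE -mulmxA -colE.
rewrite ler_sqr ?nnegrE ?mulr_ge0 ?opnorm_ge0 //.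
- exact: vnorm_mulmx_le.
- by rewrite vnorm_frob frob_ge0.
- by rewrite vnorm_frob frob_ge0.
Qed.

Lemma frob_mulmx_hermitian B H : is_hermitian H -> frob (B *m H) <= opnorm H * frob B.
Proof. by move=> hH; rewrite -frob_adj adjM hH -(frob_adj B) frob_mulmx_opnorm. Qed.

End OperatorNorm.

Lemma sum_root_of_unity_eq0 (K : idomainType) (z : K) m :
  z ^+ m = 1 -> z != 1 -> \sum_(t < m) z ^+ t = 0.
Proof.
move=> zm z1; have := subrX1 z m; rewrite zm subrr => /esym /eqP.
by rewrite mulf_eq0 subr_eq0 (negbTE z1) => /eqP.
Qed.

Section RootOfUnity.
Local Open Scope complex_scope.
Variables (R : realType) (d : nat).
Hypothesis d_gt0 : (0 < d)%N.
Local Notation w := (omega R d).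
Local Notation theta := (2 * pi / d%:R : R).

Lemma omegaX m : w ^+ m = Complex (cos (m%:R * theta)) (sin (m%:R * theta)).
Proof.
elim: m => [|m IH]; first by rewrite expr0 mul0r cos0 sin0.
rewrite exprS IH /omega; set t := (_ / d%:R).
rewrite -[m.+1]addn1 natrD mulrDl mul1r cosD sinD.
by apply/eqP; rewrite eq_complex /=; apply/andP; split; apply/eqP; ring.
Qed.

Lemma omegaXd : w ^+ d = 1.
Proof.
by rewrite omegaX mulrCA divff ?pnatr_eq0 -?lt0n // mulr1 mulr_natl cos2pi sin2pi.
Qed.

Lemma omega_mulJ : w * w^* = 1.
Proof. by rewrite -cabs2_mulJ /cabs2 /= cos2Dsin2. Qed.

Lemma omegaX_neq1 m : (0 < m < d)%N -> w ^+ m != 1.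
Proof.
case/andP => m_gt0 m_lt_d; rewrite omegaX; apply/negP => /eqP [cos1 _].
set x := m%:R * theta in cos1.
have half_gt0 : 0 < x / 2.
  by rewrite divr_gt0 // mulr_gt0 ?ltr0n // divr_gt0 ?ltr0n // mulr_gt0 ?pi_gt0.
have half_lt_pi : x / 2 < pi.
  have -> : x / 2 = pi * (m%:R / d%:R) by rewrite /x; field; rewrite pnatr_eq0 -lt0n.
  by rewrite -[X in _ < X]mulr1 ltr_pM2l ?pi_gt0 // ltr_pdivrMr ?ltr0n // mul1r ltr_nat.
have sin_pos : 0 < sin (x / 2) by apply: sin_gt0_pi; rewrite half_gt0 half_lt_pi.
have : cos x = 1 - 2 * sin (x / 2) ^+ 2.
  have {1}-> : x = (x / 2) *+ 2 by rewrite mulr2n; field.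
  by rewrite cos_mulr2n cos2sin2 mulr2n; lra.
by rewrite cos1; have := exprn_gt0 2 sin_pos; lra.
Qed.

Lemma omegaXJ_mul m : (w ^+ m)^* * w ^+ m = 1.
Proof. by rewrite rmorphXn -exprMn mulrC omega_mulJ expr1n. Qed.

Lemma omegaX_inj (y y' : 'I_d) : w ^+ y = w ^+ y' -> y = y'.
Proof.
wlog le_yy' : y y' / (y <= y')%N.
  by move=> wlog_le e; case: (leqP y y') => [/wlog_le->//|/ltnW/wlog_le e'];
    rewrite (e' (esym e)).
move=> e; have wX1 : w ^+ (y' - y) = 1.
  by rewrite -[LHS]mul1r -(omegaXJ_mul y) -mulrA -exprD subnKC // -e omegaXJ_mul.
apply/val_inj/anti_leq; rewrite le_yy' /= -subn_eq0; apply: contraLR isT => pos.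
have lt_d : (y' - y < d)%N := leq_ltn_trans (leq_subr _ _) (ltn_ord y').
by move: (omegaX_neq1 (m := y' - y)); rewrite wX1 eqxx lt0n pos lt_d => /(_ isT).
Qed.

Lemma sum_omegaX_orthogonal (y y' : 'I_d) :
  \sum_(t < d) (w ^+ y * (w ^+ y')^*) ^+ t = (d * (y == y'))%:R.
Proof.
case: eqVneq => [<-|ne].
  rewrite mulrC omegaXJ_mul; under eq_bigr do rewrite expr1n.
  by rewrite sumr_const card_ord muln1.
rewrite muln0; apply: sum_root_of_unity_eq0.
  by rewrite exprMn -rmorphXn -!exprM !(mulnC _ d) !exprM omegaXd !expr1n rmorph1 mulr1.
apply: contra ne => /eqP z1; apply/eqP/omegaX_inj.
by rewrite -[w ^+ y]mulr1 -(omegaXJ_mul y') mulrA z1 mul1r.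
Qed.

End RootOfUnity.

Section ShiftIndicator.
Variables (K : nzRingType) (d : nat).
Hypothesis d_gt0 : (0 < d)%N.

Lemma sum_shift_indicator (x y : 'I_d) :
  \sum_(s < d) ((x : nat) == ((y + s) %% d)%N)%:R = 1 :> K.
Proof.
pose s0 := Ordinal (ltn_pmod (x + (d - y)) d_gt0).
have ys0 : ((y + s0) %% d)%N = x.
  by rewrite /= modnDmr addnCA subnKC ?(ltnW (ltn_ord y)) // modnDr modn_small.
rewrite (bigD1 s0) //= ys0 eqxx big1 ?addr0 // => s ne_s; case: eqP => // e.
case/eqP: ne_s; apply/ord_inj/eqP.
by rewrite -(modn_small (ltn_ord s)) -(modn_small (ltn_ord s0)) -(eqn_modDl y) -e ys0.
Qed.

Lemma sum_shift_indicator2 (x x' y : 'I_d) :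
  \sum_(s < d) (((x : nat) == ((y + s) %% d)%N) && ((x' : nat) == ((y + s) %% d)%N))%:R
    = (x == x')%:R :> K.
Proof.
case: (eqVneq x x') => [<-|ne].
  by under eq_bigr do rewrite andbb; rewrite sum_shift_indicator.
rewrite big1 // => s _; case: eqP => //= e1; case: eqP => //= e2.
by move: ne; rewrite -val_eqE /= e1 e2 eqxx.
Qed.

End ShiftIndicator.

Section PauliOrthogonality.
Local Open Scope complex_scope.
Variables (R : realType) (d : nat).
Hypothesis d_gt0 : (0 < d)%N.
Local Notation C := R[i].
Local Notation w := (omega R d).

(* the matrix entry <x| X^s Z^t |y> of a single-site Pauli operator *)
Definition pauli_site (x y : 'I_d) (p : 'I_d * 'I_d) : C :=
  ((x : nat) == ((y + p.1) %% d)%N)%:R * w ^+ (p.2 * y)%N.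

Lemma pauli_site_orthogonal (x y x' y' : 'I_d) :
  \sum_p pauli_site x y p * (pauli_site x' y' p)^* = (d * ((x == x') && (y == y')))%:R.
Proof.
rewrite -(pair_bigA _ (fun s t => pauli_site x y (s, t) * (pauli_site x' y' (s, t))^*)) /=.
have split_st (s t : 'I_d) : pauli_site x y (s, t) * (pauli_site x' y' (s, t))^* =
    (((x : nat) == ((y + s) %% d)%N) && ((x' : nat) == ((y' + s) %% d)%N))%:R
    * (w ^+ y * (w ^+ y')^*) ^+ t.
  rewrite /pauli_site rmorphM rmorph_nat /= -mulnb natrM mulrACA.
  by rewrite exprMn !rmorphXn -!exprM !(mulnC t).
under eq_bigr do under eq_bigr do rewrite split_st.
under eq_bigr do rewrite -mulr_sumr sum_omegaX_orthogonal //.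
rewrite -mulr_suml; case: (eqVneq y y') => [<-|_]; last by rewrite !andbF muln0 mulr0.
by rewrite sum_shift_indicator2 // andbT muln1 natrM mulrC.
Qed.

End PauliOrthogonality.

Section PauliParseval.
Local Open Scope complex_scope.
Variables (R : realType) (d n : nat).
Hypothesis d_gt0 : (0 < d)%N.
Local Notation D := (dimH d n).
Local Notation op := (op R d n).

Lemma pauliE (a : pauli_string d n) k j :
  pauli R a k j = \prod_i pauli_site R (digits k i) (digits j i) (a i).
Proof. by rewrite mxE. Qed.

Lemma sum_pauli_mulJ (k j k' j' : 'I_D) :
  \sum_(a : pauli_string d n) pauli R a k j * (pauli R a k' j')^*
    = ((d ^ n) * ((k == k') && (j == j')))%:R.
Proof.
under eq_bigr do rewrite !pauliE rmorph_prod -big_split /=.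
rewrite -(bigA_distr_bigA (fun i p => pauli_site R (digits k i) (digits j i) p *
                                        (pauli_site R (digits k' i) (digits j' i) p)^*)) /=.
under eq_bigr do rewrite pauli_site_orthogonal //.
have [same|] := boolP [forall i, (digits k i == digits k' i) && (digits j i == digits j' i)].
  have [<- <-] : k = k' /\ j = j'.
    split; apply: enum_val_inj; apply/ffunP => i.
      by have /andP[/eqP ? _] := forallP same i.
    by have /andP[_ /eqP ?] := forallP same i.
  under eq_bigr do rewrite !eqxx muln1.
  by rewrite !eqxx muln1 prodr_const card_ord natrX.
rewrite negb_forall => /existsP [i ne_i]; rewrite (bigD1 i) //= (negbTE ne_i) muln0 mul0r.
case: eqVneq => [ek|]; case: eqVneq => [ej|] //=; rewrite ?muln0 //.
by rewrite ek ej !eqxx in ne_i.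
Qed.

Lemma sum_tr_pauli_mulJ (Y : op) :
  \sum_(a : pauli_string d n) \tr (Y *m pauli R a) * (\tr (Y *m pauli R a))^*
    = (\sum_(u : 'I_D * 'I_D) Y u.1 u.2 * (Y u.1 u.2)^*) *+ (d ^ n).
Proof.
have trE a : \tr (Y *m pauli R a) = \sum_(u : 'I_D * 'I_D) Y u.1 u.2 * pauli R a u.2 u.1.
  rewrite /mxtrace -(pair_bigA _ (fun k j => Y k j * pauli R a j k)) /=.
  by apply: eq_bigr => k _; rewrite mxE.
under eq_bigr do rewrite trE rmorph_sum mulr_suml.
under eq_bigr do under eq_bigr do rewrite mulr_sumr.
rewrite exchange_big /=; under eq_bigr do rewrite exchange_big /=.
rewrite -sumrMnl; apply: eq_bigr => u _.
under eq_bigr do (under eq_bigr do rewrite rmorphM mulrACA; rewrite -mulr_sumr sum_pauli_mulJ).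
rewrite (bigD1 u) //= big1 ?addr0 => [|v ne_v]; first by rewrite !eqxx muln1 mulr_natr.
suff -> : (u.2 == v.2) && (u.1 == v.1) = false by rewrite muln0 mulr0.
apply/negbTE; apply: contra ne_v => /andP [/eqP e2 /eqP e1].
by rewrite [u]surjective_pairing [v]surjective_pairing e1 e2.
Qed.

Lemma pauli_parseval (Y : op) :
  \sum_(a : pauli_string d n) cabs2 (\tr (Y *m pauli R a)) = (d ^ n)%:R * frob Y ^+ 2.
Proof.
have := congr1 (@complex.Re R) (sum_tr_pauli_mulJ Y).
rewrite raddf_sum raddfMn raddf_sum /=.
under eq_bigr do rewrite -cabs2_mulJ.
under [X in _ = X *+ _ -> _]eq_bigr do rewrite -cabs2_mulJ.
by move=> ->; rewrite mulr_natl frob_sqr pair_bigA.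
Qed.

End PauliParseval.

Lemma sum_geometric_le2 (R : realFieldType) (r : R) N :
  0 <= r -> r <= 1 / 2 -> \sum_(m < N) r ^+ m <= 2.
Proof.
move=> r_ge0 r_le; suff : \sum_(m < N) r ^+ m <= 2 - 2 * r ^+ N.
  by move/le_trans; apply; rewrite gerBl mulr_ge0 ?exprn_ge0.
elim: N => [|N IH]; first by rewrite big_ord0 expr0 mulr1 subrr.
rewrite big_ord_recr /= exprS.
have := exprn_ge0 N r_ge0; have : r * r ^+ N <= 1 / 2 * r ^+ N by rewrite ler_wpM2r ?exprn_ge0.
lra.
Qed.

Lemma series_remainder2_le (R : realType) (u : nat -> R) (K r : R) :
  0 <= K -> 0 <= r -> r <= 1 / 2 -> (forall m, `|u m| <= K * r ^+ m) ->
  `|limn (series u) - (u 0%N + u 1%N)| <= 2 * K * r ^+ 2.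
Proof.
move=> K_ge0 r_ge0 r_le u_le.
have cvg_u : cvgn (series u).
  apply: normed_cvg; apply: (@series_le_cvg _ _ (geometric K r)).
  - by move=> m /=.
  - by move=> m /=; rewrite mulr_ge0 ?exprn_ge0.
  - by move=> m /=; rewrite u_le.
  - by apply: is_cvg_geometric_series; rewrite ger0_norm //; lra.
have tail N : `|series u N.+2 - (u 0%N + u 1%N)| <= 2 * K * r ^+ 2.
  rewrite /series /= big_ltn // big_ltn //.
  set S := \sum_(2 <= i < N.+2) u i.
  have -> : u 0%N + (u 1%N + S) - (u 0%N + u 1%N) = S by ring.
  rewrite {}/S -{1}[2%N]add0n big_addn subn2 /= big_mkord.
  apply: le_trans (ler_norm_sum _ _ _) _.
  apply: le_trans (_ : \sum_(m < N) K * r ^+ 2 * r ^+ m <= _).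
    by apply: ler_sum => m _; rewrite -mulrA -exprD addnC.
  have -> : 2 * K * r ^+ 2 = K * r ^+ 2 * 2 by ring.
  rewrite -mulr_sumr; apply: ler_wpM2l; first by rewrite mulr_ge0 ?exprn_ge0.
  exact: sum_geometric_le2.
have near_tail : \forall N \near \oo, `|series u N - (u 0%N + u 1%N)| <= 2 * K * r ^+ 2.
  by exists 2%N => // N /= N_ge2; rewrite -(subnK N_ge2) addn2 tail.
rewrite ler_distl; apply/andP; split.
- by apply: limr_ge => //; apply: filterS near_tail => N; rewrite ler_distl => /andP[].
- by apply: limr_le => //; apply: filterS near_tail => N; rewrite ler_distl => /andP[].
Qed.

Section MatrixExponential.
Local Open Scope complex_scope.
Variables (R : realType) (d n : nat).
Local Notation C := R[i].
Local Notation D := (dimH d n).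
Local Notation op := (op R d n).
Local Notation K1 := (frob (1%:M : op)).
Implicit Types B : op.

Lemma frob_mxpow_le B m : frob (mxpow B m) <= K1 * frob B ^+ m.
Proof.
elim: m => [|m IH]; first by rewrite expr0 mulr1.
apply: le_trans (frob_mulmx _ _) _; rewrite exprS mulrCA.
by apply: ler_wpM2l; first exact: frob_ge0.
Qed.

Lemma normc_inv_fact m : normc ((m`!)%:R^-1 : C) <= 1.
Proof.
have -> : ((m`!)%:R^-1 : C) = ((m`!)%:R^-1 : R)%:C by rewrite fmorphV rmorph_nat.
rewrite normc_real ger0_norm ?invr_ge0 ?ler0n //.
by rewrite invf_le1 ?ler1n ?ltr0n ?fact_gt0.
Qed.

(* [expm] is defined through the limits of the real and imaginary parts of the partial sums;
   [P] stands for either projection. *)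
Lemma expm_entry_proj_le (P : {additive Rcomplex R -> R}) B k j :
  (forall z, `|P z| <= normc z) -> frob B <= 1 / 2 ->
  `|limn (fun N => P (expm_partial B N k j)) - (P (1%:M k j) + P (B k j))|
    <= 2 * K1 * frob B ^+ 2.
Proof.
move=> P_le B_le; pose u m := P ((m`!)%:R^-1 * mxpow B m k j).
have -> : (fun N => P (expm_partial B N k j)) = series u.
  apply/funext => N; rewrite /series /= /expm_partial summxE raddf_sum big_mkord.
  by apply: eq_bigr => m _; rewrite mxE.
have u0 : u 0%N = P (1%:M k j) by rewrite /u /= invr1 mul1r.
have u1 : u 1%N = P (B k j) by rewrite /u /= invr1 mul1r mulmx1.
rewrite -u0 -u1; apply: series_remainder2_le => //; first exact: frob_ge0.
  exact: frob_ge0.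
move=> m; apply: le_trans (P_le _) _; rewrite normcM.
apply: le_trans (frob_mxpow_le B m); rewrite -[X in _ <= X]mul1r.
by apply: ler_pM; rewrite ?normc_ge0 ?normc_inv_fact ?normc_le_frob.
Qed.

Lemma expm_sub_le B : frob B <= 1 / 2 ->
  frob (expm B - 1%:M - B) <= (D * D)%:R * (4 * K1 * frob B ^+ 2).
Proof.
move=> B_le; apply: frob_le_entries => k j.
apply: le_trans (normc_le_ReIm _) _; rewrite !mxE !raddfB /=.
have Re_le := expm_entry_proj_le k j (@normc_ge_absRe R) B_le.
have Im_le := expm_entry_proj_le k j (@normc_ge_absIm R) B_le.
rewrite [1%:M k j]mxE in Re_le Im_le; rewrite -!addrA -!opprD.
have -> : 4 * K1 * frob B ^+ 2 = 2 * K1 * frob B ^+ 2 + 2 * K1 * frob B ^+ 2 by ring.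
exact: lerD.
Qed.

End MatrixExponential.

Section InfluenceBound.
Local Open Scope complex_scope.
Variables (R : realType) (d n : nat).
Hypothesis d_gt0 : (0 < d)%N.
Local Notation op := (op R d n).
Local Notation dn := ((d ^ n)%:R : R).
Implicit Types X Y O : op.

Lemma weight_le (a : pauli_string d n) : (weight a <= n)%N.
Proof. by rewrite /weight (leq_trans (max_card _)) // card_ord. Qed.

Lemma l2norm_tr_pauli Y :
  l2norm (fun a : pauli_string d n => normc (\tr (Y *m pauli R a))) = Num.sqrt dn * frob Y.
Proof.
rewrite /l2norm; under eq_bigr do rewrite normc_sqr.
by rewrite pauli_parseval // sqrtrM ?ler0n // sqrtr_sqr ger0_norm ?frob_ge0.
Qed.

Lemma sum_cabs2_tr_pauli_sub_le X Y :
  \sum_(a : pauli_string d n) `|cabs2 (\tr (X *m pauli R a)) - cabs2 (\tr (Y *m pauli R a))|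
    <= dn * (frob (X - Y) * (frob X + frob Y)).
Proof.
pose nt Z (a : pauli_string d n) := normc (\tr (Z *m pauli R a)).
apply: le_trans (_ : \sum_a nt (X - Y) a * (nt X a + nt Y a) <= _).
  by apply: ler_sum => a _; rewrite /nt mulmxBl linearB cabs2B_le.
apply: le_trans (l2norm_dot_le _ _) _.
apply: le_trans (ler_wpM2l (l2norm_ge0 _) (l2normD (nt X) (nt Y))) _.
rewrite !l2norm_tr_pauli -mulrDr mulrACA -expr2 sqr_sqrtr ?ler0n //.
Qed.

Lemma influence_sub_le X Y :
  `|influence X - influence Y| <= n%:R * (frob (X - Y) * (frob X + frob Y)) / dn.
Proof.
rewrite /influence -sumrB; under eq_bigr do rewrite -mulrBr.
apply: le_trans (ler_norm_sum _ _ _) _.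
apply: le_trans (_ : \sum_a n%:R * `|pauli_weight X a - pauli_weight Y a| <= _).
  apply: ler_sum => a _; rewrite normrM ger0_norm ?ler0n //.
  by apply: ler_wpM2r => //; rewrite ler_nat weight_le.
rewrite -mulr_sumr -mulrA ler_wpM2l ?ler0n //.
have pw_sub a : `|pauli_weight X a - pauli_weight Y a| =
    `|cabs2 (\tr (X *m pauli R a)) - cabs2 (\tr (Y *m pauli R a))| / dn ^+ 2.
  by rewrite /pauli_weight -mulrBl normrM normfV [`|dn ^+ 2|]ger0_norm // exprn_ge0 ?ler0n.
under eq_bigr do rewrite pw_sub.
rewrite -mulr_suml; apply: le_trans (ler_wpM2r _ (sum_cabs2_tr_pauli_sub_le X Y)) _.
  by rewrite invr_ge0 exprn_ge0 ?ler0n.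
have dn_neq0 : dn != 0 by rewrite pnatr_eq0 expn_eq0 eqn0Ngt d_gt0.
have -> : dn * (frob (X - Y) * (frob X + frob Y)) / dn ^+ 2 =
    frob (X - Y) * (frob X + frob Y) / dn by field.
exact: lexx.
Qed.

Lemma influence_sub_le_scaled X O (delta : R) :
  frob O ^+ 2 = dn -> 0 <= delta -> frob (X - O) <= delta * frob O ->
  `|influence X - influence O| <= n%:R * (delta * (delta + 2)).
Proof.
move=> O_sqr delta_ge0 XO_le; apply: le_trans (influence_sub_le X O) _.
have O2_gt0 : 0 < frob O ^+ 2 by rewrite O_sqr ltr0n expn_gt0 d_gt0.
rewrite -O_sqr -mulrA ler_wpM2l ?ler0n // ler_pdivrMr //.
have X_le : frob X + frob O <= (delta + 2) * frob O.
  by have := frobD (X - O) O; rewrite subrK; lra.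
have -> : delta * (delta + 2) * frob O ^+ 2 = (delta * frob O) * ((delta + 2) * frob O).
  by ring.
by apply: ler_pM; rewrite ?frob_ge0 ?addr_ge0 ?frob_ge0.
Qed.

End InfluenceBound.

Section Evolution.
Local Open Scope complex_scope.
Variables (R : realType) (d n : nat).
Local Notation op := (op R d n).
Local Notation D := (dimH d n).
Variables H O : op.
Hypothesis hH : is_hermitian H.

Lemma frob_conj_sub_le (E : op) (c : R[i]) : c^* = - c ->
  frob ((1%:M + c *: H + E) *m O *m adj (1%:M + c *: H + E) - O) <=
    (2 * normc c * opnorm H + 2 * frob E + (normc c * frob H + frob E) ^+ 2) * frob O.
Proof.
move=> hc; set V := c *: H + E; set W := - (c *: H) + adj E.
have -> : adj (1%:M + c *: H + E) = 1%:M + W.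
  by rewrite !adjD adj1 adjZ hH hc scaleNr addrA.
have expand : (1%:M + c *: H + E) *m O *m (1%:M + W) - O =
    c *: (H *m O - O *m H) + (E *m O + O *m adj E) + V *m O *m W.
  rewrite -addrA -/V mulmxDl mul1mx mulmxDr mulmx1 [(O + _) *m W]mulmxDl.
  rewrite addrAC (addrAC O) subrr add0r addrA /V /W mulmxDl mulmxDr addrACA.
  by rewrite mulmxN -scalemxAl -scalemxAr scalerBr.
have frobV : frob V <= normc c * frob H + frob E by rewrite -frobZ frobD.
have frobW : frob W <= normc c * frob H + frob E.
  by rewrite -frobZ -(frobN (c *: H)) -(frob_adj E) frobD.
have comm_le : frob (c *: (H *m O - O *m H)) <= normc c * (2 * opnorm H * frob O).
  rewrite frobZ ler_wpM2l ?normc_ge0 //; apply: le_trans (frobB_le _ _) _.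
  by have := frob_mulmx_opnorm H O; have := frob_mulmx_hermitian O hH; lra.
have E_le : frob (E *m O + O *m adj E) <= 2 * frob E * frob O.
  apply: le_trans (frobD _ _) _.
  by have := frob_mulmx E O; have := frob_mulmx O (adj E); rewrite frob_adj; lra.
have VOW_le : frob (V *m O *m W) <= (normc c * frob H + frob E) ^+ 2 * frob O.
  apply: le_trans (frob_mulmx _ _) _; apply: le_trans (ler_wpM2r (frob_ge0 W) (frob_mulmx V O)) _.
  rewrite expr2 mulrAC; apply: ler_pM; rewrite ?mulr_ge0 ?frob_ge0 //.
  by apply: ler_pM; rewrite ?frob_ge0.
rewrite expand; apply: le_trans (frobD _ _) _; apply: le_trans (lerD (frobD _ _) VOW_le) _.
have := lerD comm_le E_le; rewrite !mulrDl; lra.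
Qed.

Lemma frob_conj_evol_sub_le : exists2 tau : R, 0 < tau & exists2 C : R, 0 <= C &
  forall t, `|t| <= tau ->
    frob (evol H t *m O *m adj (evol H t) - O) <= `|t| * (2 * opnorm H + `|t| * C) * frob O.
Proof.
set N := opnorm H; set h := frob H.
set KE : R := (D * D)%:R * (4 * frob (1%:M : op)).
have KE_ge0 : 0 <= KE by rewrite mulr_ge0 ?mulr_ge0 ?frob_ge0.
have [N_ge0 h_ge0] : 0 <= N /\ 0 <= h by split; [exact: opnorm_ge0 | exact: frob_ge0].
exists (2 * h + 1)^-1; first by rewrite invr_gt0; lra.
exists (2 * KE * h ^+ 2 + (h + KE * h ^+ 2) ^+ 2).
  by rewrite addr_ge0 ?sqr_ge0 // mulr_ge0 ?exprn_ge0 // mulr_ge0.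
move=> t t_le; set a := `|t|.
have a_ge0 : 0 <= a := normr_ge0 t.
have [a_le1 ah_le] : a <= 1 /\ a * h <= 1 / 2.
  have : a * (2 * h + 1) <= 1 by rewrite -ler_pdivlMr ?mul1r //; lra.
  by have := mulr_ge0 a_ge0 h_ge0; rewrite mulrDr mulr1 mulrCA; lra.
pose c : R[i] := Complex 0 (- t).
have cJ : c^* = - c by apply/eqP; rewrite eq_complex /= oppr0 !eqxx.
have normc_c : normc c = a by rewrite /= expr0n add0r sqrrN sqrtr_sqr.
set E := expm (c *: H) - 1%:M - c *: H.
have E_le : frob E <= KE * (a * h) ^+ 2.
  by rewrite -mulrA -normc_c -frobZ expm_sub_le // frobZ normc_c.
have -> : evol H t = 1%:M + c *: H + E by rewrite /E addrC -(addrA (expm _)) -opprD subrK.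
apply: le_trans (frob_conj_sub_le E cJ) _; rewrite normc_c -/N -/h.
apply: ler_wpM2r; first exact: frob_ge0.
set e := frob E in E_le *; have e_ge0 : 0 <= e := frob_ge0 E.
have e_le' : e <= a * (a * (KE * h ^+ 2)) by rewrite mulrA -expr2 mulrCA -exprMn.
have aKE_le : a * (KE * h ^+ 2) <= KE * h ^+ 2.
  by apply: ler_piMl => //; rewrite mulr_ge0 ?exprn_ge0.
have lin_le : a * h + e <= a * (h + KE * h ^+ 2).
  by rewrite mulrDr lerD2l (le_trans e_le') // ler_wpM2l.
have sq_le : (a * h + e) ^+ 2 <= a ^+ 2 * (h + KE * h ^+ 2) ^+ 2.
  by rewrite -exprMn !expr2; apply: ler_pM => //; rewrite addr_ge0 ?mulr_ge0.
have -> : a * (2 * N + a * (2 * KE * h ^+ 2 + (h + KE * h ^+ 2) ^+ 2)) =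
  2 * a * N + 2 * (a * (a * (KE * h ^+ 2))) + a ^+ 2 * (h + KE * h ^+ 2) ^+ 2 by ring.
lra.
Qed.

Lemma influence_evol_sub_le : (0 < d)%N -> hs_norm O = 1 ->
  exists2 tau : R, 0 < tau & exists C : R, forall t, `|t| <= tau ->
    `|influence (evol H t *m O *m adj (evol H t)) - influence O|
      <= `|t| * (4 * n%:R * opnorm H + `|t| * C).
Proof.
move=> d_gt0 O_hs; set N := opnorm H.
have O_sqr : frob O ^+ 2 = (d ^ n)%:R.
  have := hs_norm_sqr O; rewrite O_hs expr1n => /(congr1 ( *%R^~ (d ^ n)%:R)) /=.
  by rewrite mul1r divfK // pnatr_eq0 expn_eq0 eqn0Ngt d_gt0.
have [tau tau_gt0 [C C_ge0 XO_le]] := frob_conj_evol_sub_le.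
exists (Order.min tau 1); first by rewrite lt_min tau_gt0 ltr01.
exists (n%:R * (2 * C + (2 * N + C) ^+ 2)) => t; rewrite le_min => /andP [t_le a_le1].
set a := `|t|; have a_ge0 : 0 <= a := normr_ge0 t.
have N_ge0 : 0 <= N := opnorm_ge0 H.
apply: le_trans (influence_sub_le_scaled d_gt0 O_sqr _ (XO_le t t_le)) _.
  by rewrite mulr_ge0 // addr_ge0 ?mulr_ge0.
have m_le : 2 * N + a * C <= 2 * N + C by rewrite lerD2l ler_piMl.
have -> : a * (2 * N + a * C) * (a * (2 * N + a * C) + 2) =
  a * (4 * N + a * (2 * C + (2 * N + a * C) ^+ 2)) by ring.
have -> : a * (4 * n%:R * N + a * (n%:R * (2 * C + (2 * N + C) ^+ 2))) =
  n%:R * (a * (4 * N + a * (2 * C + (2 * N + C) ^+ 2))) by ring.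
rewrite ler_wpM2l ?ler0n // ler_wpM2l // lerD2l ler_wpM2l // lerD2l !expr2.
by apply: ler_pM => //; rewrite addr_ge0 ?mulr_ge0.
Qed.

End Evolution.

Lemma derive1_abs_le (R : realType) (g : R -> R) (y A C tau : R) : 0 < tau ->
  (forall t, `|t| <= tau -> `|g t - y| <= `|t| * (A + `|t| * C)) -> `|derive1 g 0| <= A.
Proof.
move=> tau_gt0 g_le.
have g0 : g 0 = y.
  by have := g_le 0; rewrite normr0 mul0r normr_le0 subr_eq0 => /(_ (ltW tau_gt0)) /eqP.
have quot_le (eps : R) : 0 < eps ->
    \forall h \near (0 : R)^', `|h^-1 *: (g (h + 0) - g 0)| <= A + eps.
  move=> eps_gt0; have C1_gt0 : 0 < `|C| + 1 by rewrite ltr_wpDl.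
  exists (Order.min tau (eps / (`|C| + 1))) => /=; first by rewrite lt_min tau_gt0 divr_gt0.
  move=> h; rewrite /ball /= sub0r normrN lt_min => /andP [h_tau h_eps] h_neq0.
  have h_gt0 : 0 < `|h| by rewrite normr_gt0.
  rewrite addr0 g0 normrZ normfV ler_pdivrMl // (le_trans (g_le h (ltW h_tau))) //.
  rewrite ler_wpM2l // lerD2l; apply: le_trans (ler_norm _) _; rewrite normrM normr_id.
  have : `|h| * (`|C| + 1) < eps by rewrite -ltr_pdivlMr.
  by rewrite mulrDr mulr1; lra.
have A_ge0 : 0 <= A.
  apply/ler_addgt0Pr => eps eps_gt0; have [h h_le] := filter_ex (quot_le eps eps_gt0).
  exact: le_trans (normr_ge0 _) h_le.
rewrite /derive1.
have [cv|dv] := pselect (cvg (h^-1 *: (g (h + 0) - g 0) @[h --> (0 : R)^']));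
  last by rewrite dvgP // normr0. (* [lim] of a non-convergent filter is [0] *)
apply/ler_addgt0Pr => eps eps_gt0; rewrite ler_norml; apply/andP; split.
- apply: limr_ge => //; apply: filterS (quot_le eps eps_gt0) => h.
  by rewrite ler_norml => /andP[].
- apply: limr_le => //; apply: filterS (quot_le eps eps_gt0) => h.
  by rewrite ler_norml => /andP[].
Qed.

Theorem mainTheorem16 (R : realType) (d n : nat) (hd : (2 <= d)%N) (hn : (1 <= n)%N)
  (H O : op R d n) (hH : is_hermitian H) (hO : hs_norm O = 1) :
  `| influence_rate H O | <= 4 * n%:R * opnorm H.
Proof.
have d_gt0 : (0 < d)%N by apply: leq_trans hd.
have [tau tau_gt0 [C infl_le]] := influence_evol_sub_le (O := O) hH d_gt0 hO.
exact: derive1_abs_le tau_gt0 infl_le.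
Qed.
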